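(* Let $\gamma, c_1, c_2 > 0$ be real numbers. There exist $\alpha_0 > 0$ and $N_0$, depending only on $\gamma, c_1, c_2$, such that the following holds. Let $N \ge N_0$, let $Q = N^\gamma$, let $X \subseteq [N]$ be a set of integers, and suppose there is a set of primes $P \subseteq \mathcal{P}(Q)$ with $w(P) \ge c_1 \log Q$ such that for every $p \in P$ there are at least $c_2|X|$ elements of $X$ lying in at most $\alpha p$ residue classes modulo $p$, where $0 < \alpha \le \alpha_0$ is independent of $p$. Then $|X| < Q$.
   Context: $[N] = \{0,1,\ldots,N\}$. $\mathcal{P}(Q)$ denotes the set of primes $p \le Q$, and for a finite set of primes $P$, $w(P) := \sum_{p \in P} \frac{\log p}{p}$. *)

From Stdlib Require Import Reals.
From mathcomp Require Import all_boot.

(* w(P) = sum_{p in P} log p / p, for a finite set of primes P given as a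
   duplicate-free list. *)
Definition w (P : seq nat) : R :=
  foldr (fun (p : nat) (acc : R) => Rplus (Rdiv (ln (INR p)) (INR p)) acc) R0 P.

(* "at least c2|X| elements of X lie in at most alpha*p residue classes mod p":
   there is a set S of residues mod p with |S| <= alpha p such that at least
   c2 |X| elements x of X satisfy x mod p in S. *)
Definition concentrated (X : seq nat) (p : nat) (alpha c2 : R) : Prop :=
  exists S : seq nat, uniq S /\ all (fun r => r < p) S /\
    Rle (INR (size S)) (Rmult alpha (INR p)) /\
    Rle (Rmult c2 (INR (size X))) (INR (size [seq x <- X | x %% p \in S])).

From Stdlib Require Import Reals.
From mathcomp Require Import all_boot all_order all_algebra Rstruct.
From mathcomp.algebra_tactics Require Import ring lra.
Import Order.TTheory GRing.Theory Num.Theory.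

(* Count the pairs (x, y) of X with x = y mod p, weighted by ln p.  If many
   elements of X fall into at most alpha p classes mod p, Cauchy-Schwarz makes
   p times this count at least |X|^2 / alpha, so the weighted total is at
   least w(P) |X|^2 / alpha >= c1 gamma ln N |X|^2 / alpha.  On the other hand
   the diagonal pairs contribute |X| sum ln p <= |X| Q ln Q, and a pair x <> y
   contributes at most ln |x - y| <= ln N since the primes of P dividing
   x - y have product dividing x - y.  Hence if |X| >= Q, c1 gamma c2^2 <=
   alpha (1 + gamma), which fails for alpha small. *)

Definition congr_pairs (X : seq nat) (p : nat) : nat :=
  \sum_(x <- X) count (fun y => y == x %[mod p]) X.

Lemma big_fibers_seq (I T : eqType) (S : seq I) (X : seq T) (k : T -> I)
    (F : T -> nat) :
  uniq S -> \sum_(r <- S) \sum_(x <- X | k x == r) F x = \sum_(x <- X | k x \in S) F x.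
Proof.
move=> uS; rewrite (exchange_big_dep xpredT) //= [RHS]big_mkcond /=.
apply: eq_bigr => x _; rewrite big_const_seq.
have -> : count (fun r => k x == r) S = (k x \in S : nat).
  by rewrite -count_uniq_mem //; apply: eq_count => r; rewrite eq_sym.
by case: (k x \in S); rewrite /= ?addn0.
Qed.

Lemma sum_count_mod (X S : seq nat) (p : nat) : uniq S ->
  \sum_(r <- S) count (fun x => x %% p == r) X = count (fun x => x %% p \in S) X.
Proof.
move=> uS; rewrite -sum1_count -big_fibers_seq //.
by apply: eq_bigr => r _; rewrite sum1_count.
Qed.

Lemma sum_sqr_count_mod_le (X S : seq nat) (p : nat) : uniq S ->
  \sum_(r <- S) count (fun x => x %% p == r) X ^ 2 <= congr_pairs X p.
Proof.
move=> uS; have fiber_sqr r : count (fun x => x %% p == r) X ^ 2 =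
    \sum_(x <- X | x %% p == r) count (fun y => y == x %[mod p]) X.
  rewrite (eq_bigr (fun=> count (fun x => x %% p == r) X)); last first.
    by move=> x /eqP ->.
  by rewrite big_const_seq iter_addn_0 mulnn.
rewrite (eq_bigr _ (fun r _ => fiber_sqr r)) big_fibers_seq // /congr_pairs.
by rewrite big_mkcond leq_sum // => x _; case: ifP.
Qed.

Lemma prod_uniq_primes_dvd (s : seq nat) (d : nat) :
  uniq s -> all prime s -> all (dvdn^~ d) s -> \prod_(p <- s) p %| d.
Proof.
elim: s => [|p s IH] /=; first by rewrite big_nil dvd1n.
move=> /andP[p_notin_s uniq_s] /andP[p_prime s_prime] /andP[p_dvd_d s_dvd_d].
rewrite big_cons Gauss_dvd ?p_dvd_d ?IH // prime_coprime // Euclid_dvd_prod //.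
rewrite big_has_cond; apply: contra p_notin_s => /hasP[q q_in_s /= p_dvd_q].
by rewrite (eqP _ : p = q) // -dvdn_prime2 // (allP s_prime).
Qed.

Local Open Scope ring_scope.

Lemma sqr_sum_le {R : realDomainType} {I : Type} (s : seq I) (f : I -> R) :
  (\sum_(i <- s) f i) ^+ 2 <= (size s)%:R * \sum_(i <- s) f i ^+ 2.
Proof.
elim: s => [|i s IH]; first by rewrite !big_nil expr0n mul0r.
rewrite !big_cons /= -natr1.
set a := f i; set A := \sum_(j <- s) f j; set B := \sum_(j <- s) f j ^+ 2.
set k : R := (size s)%:R; move: IH; rewrite -/A -/B -/k => IH.
have k_ge0 : 0 <= k by rewrite ler0n.
have B_ge0 : 0 <= B by apply: sumr_ge0 => j _; exact: sqr_ge0.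
suff : 2 * a * A <= k * a ^+ 2 + B by nra.
have [k0|k_gt0] := eqVneq k 0.
  have A0 : A = 0.
    by apply/eqP; rewrite -sqrf_eq0 eq_le sqr_ge0 andbT; rewrite k0 mul0r in IH.
  by rewrite A0 k0; lra.
(* as k B >= A^2, k (k a^2 + B - 2 a A) >= (k a - A)^2 *)
have : 0 <= k * (k * a ^+ 2 + B - 2 * a * A) by have := sqr_ge0 (k * a - A); nra.
by rewrite pmulr_rge0 ?lt_def ?k_gt0 //; lra.
Qed.

Lemma concentrated_congr_pairs {X : seq nat} {p : nat} {alpha c2 : R} :
  0 <= c2 -> concentrated X p alpha c2 ->
  (c2 * (size X)%:R) ^+ 2 <= alpha * p%:R * (congr_pairs X p)%:R.
Proof.
move=> c2_ge0 [S [uS [_ [/RleP small_S /RleP many_in_S]]]].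
rewrite !INRE RmultE in small_S many_in_S; rewrite size_filter in many_in_S.
pose c r : R := (count (fun x => x %% p == r)%N X)%:R.
have sum_c : \sum_(r <- S) c r = (count (fun x => x %% p \in S)%N X)%:R.
  by rewrite -natr_sum sum_count_mod.
have sum_c2 : \sum_(r <- S) c r ^+ 2 <= (congr_pairs X p)%:R.
  by rewrite (eq_bigr _ (fun r _ => esym (natrX _ _ _))) -natr_sum ler_nat
    sum_sqr_count_mod_le.
have cs := sqr_sum_le S c; rewrite sum_c in cs.
have sum_c2_ge0 : 0 <= \sum_(r <- S) c r ^+ 2.
  by apply: sumr_ge0 => r _; exact: sqr_ge0.
have u_ge0 : 0 <= c2 * (size X)%:R by rewrite mulr_ge0.
have ap_ge0 : 0 <= alpha * p%:R by apply: le_trans small_S.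
apply: le_trans (_ : (size S)%:R * \sum_(r <- S) c r ^+ 2 <= _).
  by apply: le_trans cs; rewrite lerXn2r ?nnegrE ?ler0n.
by apply: le_trans (ler_wpM2r sum_c2_ge0 small_S) _; rewrite ler_wpM2l.
Qed.

Lemma ln_le (x y : R) : 0 < x -> x <= y -> ln x <= ln y.
Proof.
move=> x_gt0; rewrite le_eqVlt => /predU1P[-> //|lt_xy].
by apply/RleP/Rlt_le/ln_increasing; apply/RltP.
Qed.

Lemma ln_nat_ge0 {n : nat} : (0 < n)%N -> 0 <= ln n%:R.
Proof.
move=> n_gt0; have -> : 0 = ln 1 by rewrite ln_1.
by apply: ln_le; rewrite ?ler1n.
Qed.

Lemma ln_prod (I : eqType) (s : seq I) (f : I -> R) : {in s, forall i, 0 < f i} ->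
  \sum_(i <- s) ln (f i) = ln (\prod_(i <- s) f i).
Proof.
elim: s => [|i s IH] f_gt0; first by rewrite !big_nil ln_1.
have f_gt0_s : {in s, forall j, 0 < f j} by move=> j js; rewrite f_gt0 // inE js orbT.
rewrite !big_cons IH // ln_mult //; apply/RltP; first by rewrite f_gt0 ?mem_head.
by rewrite big_seq prodr_gt0.
Qed.

Lemma sum_ln_primes_dvd_le {P : seq nat} {d : nat} :
  uniq P -> all prime P -> (0 < d)%N -> \sum_(p <- P | (p %| d)%N) ln p%:R <= ln d%:R.
Proof.
move=> uniq_P P_prime d_gt0; set D := [seq p <- P | (p %| d)%N].
have D_prime : all prime D.
  by apply/allP => p; rewrite mem_filter => /andP[_ /(allP P_prime)].
have D_gt0 : {in D, forall p, 0 < p%:R :> R}.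
  by move=> p /(allP D_prime) /prime_gt0; rewrite ltr0n.
have D_dvd : (\prod_(p <- D) p %| d)%N.
  by apply: prod_uniq_primes_dvd; rewrite ?filter_uniq // all_filter;
    apply/allP => p _; apply/implyP.
rewrite -big_filter ln_prod // -natr_prod; apply: ln_le.
  by rewrite ltr0n (dvdn_gt0 d_gt0 D_dvd).
by rewrite ler_nat dvdn_leq.
Qed.

Lemma sum_ln_congr_le (P : seq nat) (x y N : nat) :
  uniq P -> all prime P -> x != y -> (x <= N)%N -> (y <= N)%N ->
  \sum_(p <- P | (y == x %[mod p])%N) ln p%:R <= ln N%:R.
Proof.
move=> uniq_P P_prime; wlog le_xy : x y / (x <= y)%N => [hwlog|].
  case: (leqP x y) => [|/ltnW le_yx] neq_xy xN yN; first exact: hwlog.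
  rewrite (eq_bigl (fun p => (x == y %[mod p])%N)) => [|p]; last by rewrite eq_sym.
  by apply: hwlog; rewrite // eq_sym.
move=> neq_xy _ yN.
have d_gt0 : (0 < y - x)%N by rewrite subn_gt0 ltn_neqAle neq_xy.
rewrite (eq_bigl (fun p => (p %| y - x)%N)) => [|p]; last by rewrite eqn_mod_dvd.
apply: le_trans (sum_ln_primes_dvd_le uniq_P P_prime d_gt0) _.
by rewrite ln_le ?ltr0n ?ler_nat // (leq_trans (leq_subr _ _)).
Qed.

Lemma congr_pairs_ln_le {X P : seq nat} {N : nat} :
  (0 < N)%N -> uniq X -> all (fun x => x <= N)%N X -> uniq P -> all prime P ->
  \sum_(p <- P) ln p%:R * (congr_pairs X p)%:R <=
    (size X)%:R ^+ 2 * ln N%:R + (size X)%:R * \sum_(p <- P) ln p%:R.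
Proof.
move=> N_gt0 uniq_X X_le_N uniq_P P_prime.
set K := \sum_(p <- P) ln p%:R; set n : R := (size X)%:R.
have lnN_ge0 := ln_nat_ge0 N_gt0.
have -> : \sum_(p <- P) ln p%:R * (congr_pairs X p)%:R =
    \sum_(x <- X) \sum_(y <- X) \sum_(p <- P | (y == x %[mod p])%N) ln p%:R.
  under eq_bigr => p _ do rewrite natr_sum mulr_sumr.
  rewrite exchange_big; apply: eq_bigr => x _.
  under eq_bigr => p _ do rewrite -sum1_count natr_sum mulr_sumr mulr1.
  by rewrite (exchange_big_dep xpredT).
have row_le x : x \in X ->
    \sum_(y <- X) \sum_(p <- P | (y == x %[mod p])%N) ln p%:R <= K + n * ln N%:R.
  move=> xX; rewrite (bigD1_seq x) //= (eq_bigl xpredT) => [|p]; last exact: eqxx.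
  rewrite lerD2l; apply: le_trans (_ : \sum_(y <- X) ln N%:R <= _); last first.
    by rewrite big_const_seq count_predT iter_addr_0 mulr_natl.
  rewrite [leRHS]big_mkcond big_seq_cond [leLHS]big_mkcond /=.
  apply: ler_sum => y _; case: ifP => // /andP[yX nyx].
  by rewrite sum_ln_congr_le // ?(allP X_le_N) // eq_sym.
rewrite big_seq; apply: le_trans (ler_sum _ row_le) _.
by rewrite -big_seq big_const_seq count_predT iter_addr_0 -mulr_natl; lra.
Qed.

Lemma size_uniq_le {s : seq nat} {Q : R} : 0 <= Q -> uniq s ->
  (forall p, p \in s -> (0 < p)%N /\ p%:R <= Q) -> (size s)%:R <= Q.
Proof.
move=> Q_ge0 uniq_s s_in_range.
apply: le_trans (_ : (Num.trunc Q)%:R <= Q); last by rewrite truncn_le.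
rewrite ler_nat -(size_iota 1 (Num.trunc Q)) uniq_leq_size // => p ps.
have [p_gt0 p_le_Q] := s_in_range p ps.
by rewrite mem_iota add1n ltnS p_gt0 truncn_ge_nat.
Qed.

Lemma sum_ln_le {P : seq nat} {Q : R} :
  (forall p, p \in P -> (0 < p)%N /\ p%:R <= Q) ->
  \sum_(p <- P) ln p%:R <= (size P)%:R * ln Q.
Proof.
move=> P_in_range; apply: le_trans (_ : \sum_(p <- P) ln Q <= _); last first.
  by rewrite big_const_seq count_predT iter_addr_0 mulr_natl.
rewrite big_seq [leRHS]big_seq; apply: ler_sum => p pP.
by have [p_gt0 p_le_Q] := P_in_range p pP; rewrite ln_le ?ltr0n.
Qed.

Lemma wE (P : seq nat) : w P = \sum_(p <- P) ln p%:R / p%:R.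
Proof.
elim: P => [|p P IH]; first by rewrite big_nil.
by rewrite big_cons -IH /= INRE RdivE RplusE.
Qed.

Lemma w_le_congr_pairs_ln {X P : seq nat} {alpha c2 : R} :
  0 <= c2 -> all prime P -> (forall p, p \in P -> concentrated X p alpha c2) ->
  w P * (c2 * (size X)%:R) ^+ 2 <= alpha * \sum_(p <- P) ln p%:R * (congr_pairs X p)%:R.
Proof.
move=> c2_ge0 P_prime P_conc; rewrite wE mulr_suml mulr_sumr big_seq [leRHS]big_seq.
apply: ler_sum => p pP; have p_gt0 : 0 < p%:R :> R by rewrite ltr0n prime_gt0 ?(allP P_prime).
have lnp_ge0 : 0 <= ln p%:R / p%:R.
  by rewrite divr_ge0 ?ln_nat_ge0 ?ltW // -(ltr0n R).
have -> : alpha * (ln p%:R * (congr_pairs X p)%:R) =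
    ln p%:R / p%:R * (alpha * p%:R * (congr_pairs X p)%:R) by field; rewrite gt_eqF.
by rewrite ler_wpM2l // (concentrated_congr_pairs c2_ge0 (P_conc p pP)).
Qed.

Lemma concentration_bounds_alpha {gamma c1 c2 alpha : R} {N : nat} {X P : seq nat} :
  0 <= gamma -> 0 <= c2 -> 0 <= alpha -> (1 < N)%N ->
  uniq X -> all (fun x => x <= N)%N X -> uniq P ->
  (forall p, p \in P -> prime p /\ p%:R <= Rpower N%:R gamma) ->
  c1 * ln (Rpower N%:R gamma) <= w P ->
  (forall p, p \in P -> concentrated X p alpha c2) ->
  Rpower N%:R gamma <= (size X)%:R ->
  c1 * gamma * c2 ^+ 2 <= alpha * (1 + gamma).
Proof.
move=> gamma_ge0 c2_ge0 alpha_ge0 N_gt1 uniq_X X_le_N uniq_P P_small w_large P_conc.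
set Q := Rpower N%:R gamma in P_small w_large *; set n : R := (size X)%:R => Q_le_n.
set L := ln N%:R; set K := \sum_(p <- P) ln p%:R.
have P_prime : all prime P by apply/allP => p /P_small[].
have P_range p : p \in P -> (0 < p)%N /\ p%:R <= Q.
  by move=> /P_small[/prime_gt0].
have L_gt0 : 0 < L.
  have -> : 0 = ln 1 by rewrite ln_1.
  by apply/RltP/ln_increasing; apply/RltP; rewrite ?ltr01 ?ltr1n.
have lnQ : ln Q = gamma * L by rewrite /Q ln_Rpower.
have Q_gt0 : 0 < Q by apply/RltP/exp_pos.
have size_P := size_uniq_le (ltW Q_gt0) uniq_P P_range.
have K_le : K <= (size P)%:R * (gamma * L) by rewrite -lnQ sum_ln_le.
have upper := congr_pairs_ln_le (ltnW N_gt1) uniq_X X_le_N uniq_P P_prime.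
have lower := w_le_congr_pairs_ln c2_ge0 P_prime P_conc.
rewrite lnQ in w_large; rewrite -/n -/L -/K in upper lower.
have n_gt0 : 0 < n := lt_le_trans Q_gt0 Q_le_n.
have gammaL_ge0 : 0 <= gamma * L := mulr_ge0 gamma_ge0 (ltW L_gt0).
have K_le_nL : n * K <= n * (n * (gamma * L)).
  rewrite ler_pM2l //; apply: le_trans K_le _.
  by apply: ler_wpM2r => //; apply: le_trans size_P Q_le_n.
rewrite -(@ler_pM2r _ (n ^+ 2 * L)) ?mulr_gt0 ?exprn_gt0 //.
have -> : c1 * gamma * c2 ^+ 2 * (n ^+ 2 * L) = c1 * (gamma * L) * (c2 * n) ^+ 2 by ring.
apply: le_trans (ler_wpM2r (sqr_ge0 _) w_large) _; apply: le_trans lower _.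
have -> : alpha * (1 + gamma) * (n ^+ 2 * L) = alpha * (n ^+ 2 * L + n * (n * (gamma * L))).
  by ring.
by rewrite ler_wpM2l // (le_trans upper) // lerD2l.
Qed.

Local Close Scope ring_scope.

Theorem lemma3p1 (gamma c1 c2 : R) :
  Rlt R0 gamma -> Rlt R0 c1 -> Rlt R0 c2 ->
  exists (alpha0 : R) (N0 : nat), Rlt R0 alpha0 /\
  forall (N : nat) (X P : seq nat) (alpha : R),
    N0 <= N ->
    uniq X -> all (fun x => x <= N) X ->
    uniq P -> (forall p, p \in P -> prime p /\ Rle (INR p) (Rpower (INR N) gamma)) ->
    Rle (Rmult c1 (ln (Rpower (INR N) gamma))) (w P) ->
    Rlt R0 alpha -> Rle alpha alpha0 ->
    (forall p, p \in P -> concentrated X p alpha c2) ->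
    Rlt (INR (size X)) (Rpower (INR N) gamma).
Proof.
move=> /RltP gamma_gt0 /RltP c1_gt0 /RltP c2_gt0.
have C_gt0 : (0 < c1 * gamma * c2 ^+ 2)%R by rewrite !mulr_gt0 ?exprn_gt0.
exists (c1 * gamma * c2 ^+ 2 / (2 * (1 + gamma)))%R, 2; split.
  by apply/RltP; rewrite divr_gt0 // mulr_gt0 // addr_gt0.
move=> N X P alpha N_ge2 uniq_X X_le_N uniq_P P_small w_large
  /RltP alpha_gt0 /RleP alpha_small P_conc.
apply/RltP; rewrite !INRE ltNge; apply/negP => Q_le_n.
have P_small' p : p \in P -> prime p /\ (p%:R <= Rpower N%:R gamma)%R.
  by move=> /P_small[p_prime /RleP]; rewrite !INRE.
move/RleP: w_large; rewrite INRE RmultE => w_large.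
have := concentration_bounds_alpha (ltW gamma_gt0) (ltW c2_gt0) (ltW alpha_gt0) N_ge2
  uniq_X X_le_N uniq_P P_small' w_large P_conc Q_le_n.
rewrite ler_pdivlMr ?mulr_gt0 ?addr_gt0 // in alpha_small.
lra.
Qed.
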